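(* Let $1<\beta<2$ and let $N\ge 5$ be an integer, $h=(b-a)/N$. There exists a positive constant $c_1$, independent of $h$ and of $\bm v$, such that for every nonzero $\bm v\in V_h$ \[ (-\delta^{\beta}_{x,+}\bm v,\bm v)=(-\delta^{\beta}_{x,-}\bm v,\bm v)> c_1\ln 2\,\|\bm v\|^2 . \]
   Context: Let $a<b$, $N$ a positive integer, $h=(b-a)/N$, grid $x_i=a+ih$, $i=0,\dots,N$. $V_h$ is the space of real grid functions $\bm v=(v_0,\dots,v_N)$ with $v_0=v_N=0$; for $\bm u,\bm v\in V_h$ define $(\bm u,\bm v)=h\sum_{i=1}^{N-1}u_iv_i$ and $\|\bm u\|=\sqrt{(\bm u,\bm u)}$. For $1<\beta<2$ let $g^{(\beta)}_k=(-1)^k\binom{\beta}{k}$, $\lambda_1=\frac{\beta^2+3\beta+2}{12}$, $\lambda_0=\frac{4-\beta^2}{6}$, $\lambda_{-1}=\frac{\beta^2-3\beta+2}{12}$, and $\omega^{(\beta)}_0=\lambda_1g^{(\beta)}_0$, $\omega^{(\beta)}_1=\lambda_1g^{(\beta)}_1+\lambda_0g^{(\beta)}_0$, $\omega^{(\beta)}_k=\lambda_1g^{(\beta)}_k+\lambda_0g^{(\beta)}_{k-1}+\lambda_{-1}g^{(\beta)}_{k-2}$ for $k\ge2$. For $\bm v\in V_h$ and $1\le i\le N-1$ define the weighted shifted Grünwald difference operators $(\delta^{\beta}_{x,+}\bm v)_i=h^{-\beta}\sum_{k=0}^{i+1}\omega^{(\beta)}_k v_{i-k+1}$ and $(\delta^{\beta}_{x,-}\bm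 v)_i=h^{-\beta}\sum_{k=0}^{N-i+1}\omega^{(\beta)}_k v_{i+k-1}$ (entries with index $0$ or $N$ are zero), and $(\delta^\beta_{x,\pm}\bm v,\bm v)=h\sum_{i=1}^{N-1}(\delta^\beta_{x,\pm}\bm v)_iv_i$. *)

From Stdlib Require Import Reals Lra Lia.
Open Scope R_scope.

(* sum_{i=m}^{n} f i  (empty, = 0, when n < m) *)
Fixpoint sum_lt (n : nat) (f : nat -> R) : R :=
  match n with
  | O => 0
  | S n' => sum_lt n' f + f n'
  end.
Definition rsum (m n : nat) (f : nat -> R) : R :=
  sum_lt (S n - m) (fun j => f (m + j)%nat).

Fixpoint gbinom (beta : R) (k : nat) : R :=
  match k with
  | O => 1
  | S k' => gbinom beta k' * (beta - INR k') / INR (S k')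
  end.

Definition gcoef (beta : R) (k : nat) : R := (-1) ^ k * gbinom beta k.

Definition lam1 (beta : R) : R := (beta ^ 2 + 3 * beta + 2) / 12.
Definition lam0 (beta : R) : R := (4 - beta ^ 2) / 6.
Definition lamm1 (beta : R) : R := (beta ^ 2 - 3 * beta + 2) / 12.

Definition omega (beta : R) (k : nat) : R :=
  match k with
  | O => lam1 beta * gcoef beta 0
  | S O => lam1 beta * gcoef beta 1 + lam0 beta * gcoef beta 0
  | S (S j) => lam1 beta * gcoef beta k + lam0 beta * gcoef beta (S j)
               + lamm1 beta * gcoef beta j
  end.

Definition mesh (a b : R) (N : nat) : R := (b - a) / INR N.

(* grid functions are v : nat -> R, only indices 0..N matter;
   v belongs to V_h iff v_0 = v_N = 0 *)
Definition in_Vh (N : nat) (v : nat -> R) : Prop := v 0%nat = 0 /\ v N = 0.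

Definition ip (a b : R) (N : nat) (u v : nat -> R) : R :=
  mesh a b N * rsum 1 (N - 1) (fun i => u i * v i).
Definition nrm (a b : R) (N : nat) (v : nat -> R) : R := sqrt (ip a b N v v).

(* weighted shifted Gruenwald operators (values at 1 <= i <= N-1) *)
Definition delta_plus (beta a b : R) (N : nat) (v : nat -> R) (i : nat) : R :=
  Rpower (mesh a b N) (- beta) *
  rsum 0 (S i) (fun k => omega beta k * v (S i - k)%nat).
Definition delta_minus (beta a b : R) (N : nat) (v : nat -> R) (i : nat) : R :=
  Rpower (mesh a b N) (- beta) *
  rsum 0 (S (N - i)) (fun k => omega beta k * v (i + k - 1)%nat).

From Pilot Require Import Defs.
From Stdlib Require Import Reals Lra Lia.
Open Scope R_scope.

(* Extending v by zero, both quadratic forms become -h^(1-beta) sum_k omega_k rho_|k-1|,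
   where rho_d = sum_i v_i v_(i+d) is the autocorrelation of v; this gives the equality.
   Since rho_d <= rho_0 = sum_i v_i^2, omega_0 + omega_2 >= 0 and omega_k >= 0 for k >= 3,
   the form is at least -(sum_(k<=N) omega_k) h^(1-beta) rho_0.  Written through the tails
   G_m = -sum_(k<=m) g_k > 0, the factor -sum_(k<=N) omega_k is at least G_N / 2 for N >= 5,
   and G_m (m-1)^beta is nondecreasing by Bernoulli's inequality, so
   h^(-beta) G_N = (b-a)^(-beta) N^beta G_N >= (b-a)^(-beta) G_2 > 0. *)

Lemma sum_lt_ext n f g :
  (forall j, (j < n)%nat -> f j = g j) -> sum_lt n f = sum_lt n g.
Proof.
  induction n as [|n IH]; intros H; simpl; [reflexivity|].
  rewrite IH by (intros; apply H; lia). now rewrite (H n) by lia.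
Qed.

Lemma sum_lt_le n f g :
  (forall j, (j < n)%nat -> f j <= g j) -> sum_lt n f <= sum_lt n g.
Proof.
  induction n as [|n IH]; intros H; simpl; [lra|].
  pose proof (IH (fun j Hj => H j ltac:(lia))). pose proof (H n ltac:(lia)). lra.
Qed.

Lemma sum_lt_plus n f g :
  sum_lt n (fun j => f j + g j) = sum_lt n f + sum_lt n g.
Proof. induction n as [|n IH]; simpl; [lra|]. rewrite IH; ring. Qed.

Lemma sum_lt_scal n c f : sum_lt n (fun j => c * f j) = c * sum_lt n f.
Proof. induction n as [|n IH]; simpl; [ring|]. rewrite IH; ring. Qed.

Lemma sum_lt_zero n f : (forall j, (j < n)%nat -> f j = 0) -> sum_lt n f = 0.
Proof.
  intros H. transitivity (0 * sum_lt n f); [|ring].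
  rewrite <- sum_lt_scal. apply sum_lt_ext. intros j Hj. rewrite H by exact Hj. ring.
Qed.

Lemma sum_lt_Sl n f : sum_lt (S n) f = f 0%nat + sum_lt n (fun j => f (S j)).
Proof. induction n as [|n IH]; simpl in *; [ring|]. rewrite IH. ring. Qed.

Lemma sum_lt_add m n f :
  sum_lt (m + n) f = sum_lt m f + sum_lt n (fun j => f (m + j)%nat).
Proof.
  induction n as [|n IH]; simpl; [rewrite Nat.add_0_r; ring|].
  rewrite Nat.add_succ_r. simpl. rewrite IH. ring.
Qed.

Lemma sum_lt_swap n m F :
  sum_lt n (fun i => sum_lt m (fun k => F i k))
  = sum_lt m (fun k => sum_lt n (fun i => F i k)).
Proof.
  induction n as [|n IH]; simpl.
  - symmetry. now apply sum_lt_zero.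
  - rewrite IH, <- sum_lt_plus. reflexivity.
Qed.

Lemma sum_lt_extend n m f :
  (n <= m)%nat -> (forall k, (n <= k < m)%nat -> f k = 0) ->
  sum_lt n f = sum_lt m f.
Proof.
  intros Hnm H. replace m with (n + (m - n))%nat by lia.
  rewrite sum_lt_add, (sum_lt_zero (m - n)); [ring|].
  intros k Hk. apply H. lia.
Qed.

Lemma sum_lt_nonneg n f : (forall j, (j < n)%nat -> 0 <= f j) -> 0 <= sum_lt n f.
Proof.
  intros H. rewrite <- (sum_lt_zero n (fun _ => 0)) by reflexivity.
  now apply sum_lt_le.
Qed.

Lemma sum_lt_pos n f j0 :
  (forall j, (j < n)%nat -> 0 <= f j) -> (j0 < n)%nat -> 0 < f j0 -> 0 < sum_lt n f.
Proof.
  induction n as [|n IH]; intros H Hj0 Hf; [lia|]. simpl.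
  pose proof (H n ltac:(lia)).
  destruct (Nat.eq_dec j0 n) as [->|Hne].
  - pose proof (sum_lt_nonneg n f (fun j Hj => H j ltac:(lia))). lra.
  - pose proof (IH (fun j Hj => H j ltac:(lia)) ltac:(lia) Hf). lra.
Qed.

Lemma sum_lt_mul_swap n m (x c : nat -> R) (u : nat -> nat -> R) :
  sum_lt n (fun j => x j * sum_lt m (fun k => c k * u j k))
  = sum_lt m (fun k => c k * sum_lt n (fun j => x j * u j k)).
Proof.
  rewrite (sum_lt_ext n _ (fun j => sum_lt m (fun k => c k * (x j * u j k)))).
  - rewrite sum_lt_swap. apply sum_lt_ext. intros k _. now rewrite <- sum_lt_scal.
  - intros j _. rewrite <- sum_lt_scal. apply sum_lt_ext. intros k _. ring.
Qed.

Lemma sum_lt_shift d n f :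
  (forall i, (i <= d)%nat -> f i = 0) -> (forall i, (n < i)%nat -> f i = 0) ->
  sum_lt n (fun j => f (1 + j)%nat) = sum_lt n (fun j => f (1 + j + d)%nat).
Proof.
  intros Hlow Hhigh.
  rewrite (sum_lt_extend n (n + d) (fun j => f (1 + j)%nat)) by (lia || intros; apply Hhigh; lia).
  rewrite Nat.add_comm, sum_lt_add, (sum_lt_zero d) by (intros; apply Hlow; lia).
  rewrite Rplus_0_l. apply sum_lt_ext. intros j _. f_equal. lia.
Qed.

Lemma sum_lt_shift_back_le d n f :
  (forall i, 0 <= f i) -> f 0%nat = 0 ->
  sum_lt n (fun j => f (1 + j - d)%nat) <= sum_lt n (fun j => f (1 + j)%nat).
Proof.
  intros Hf Hf0. revert n. induction d as [|d IH]; intros n.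
  - apply Req_le, sum_lt_ext. reflexivity.
  - destruct n as [|n]; [simpl; lra|].
    rewrite sum_lt_Sl. replace (1 + 0 - S d)%nat with 0%nat by lia. rewrite Hf0.
    rewrite (sum_lt_ext n _ (fun j => f (1 + j - d)%nat)) by (intros; f_equal; lia).
    pose proof (IH n). pose proof (Hf (1 + n)%nat). cbn [sum_lt]. lra.
Qed.

Definition corr (n : nat) (w : nat -> R) (d : nat) : R :=
  sum_lt n (fun j => w (1 + j)%nat * w (1 + j + d)%nat).

Definition lag (k : nat) : nat := match k with O => 1%nat | S d => d end.

Section Autocorrelation.
Variables (n : nat) (w : nat -> R).
Hypothesis w_0 : w 0%nat = 0.
Hypothesis w_out : forall i, (n < i)%nat -> w i = 0.

Lemma corr_backward d :
  sum_lt n (fun j => w (1 + j)%nat * w (1 + j - d)%nat) = corr n w d.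
Proof.
  unfold corr.
  rewrite (sum_lt_shift d n (fun i => w i * w (i - d)%nat)).
  - apply sum_lt_ext. intros j _. now rewrite Nat.add_sub, Rmult_comm.
  - intros i Hi. replace (i - d)%nat with 0%nat by lia. rewrite w_0. ring.
  - intros i Hi. rewrite w_out by exact Hi. ring.
Qed.

Lemma corr0_sum_sq : corr n w 0 = sum_lt n (fun j => w (1 + j)%nat * w (1 + j)%nat).
Proof. apply sum_lt_ext. intros j _. now rewrite Nat.add_0_r. Qed.

Lemma corr_le_corr0 d : corr n w d <= corr n w 0.
Proof.
  rewrite <- corr_backward, corr0_sum_sq.
  pose proof (sum_lt_shift_back_le d n (fun i => w i * w i)
                (fun i => Rle_0_sqr (w i)) ltac:(cbv beta; rewrite w_0; ring)) as Hshift.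
  apply Rle_trans with
    (sum_lt n (fun j => / 2 * (w (1 + j)%nat * w (1 + j)%nat
                              + w (1 + j - d)%nat * w (1 + j - d)%nat))).
  - apply sum_lt_le. intros j _.
    pose proof (Rle_0_sqr (w (1 + j)%nat - w (1 + j - d)%nat)). unfold Rsqr in *. lra.
  - rewrite sum_lt_scal, sum_lt_plus. cbv beta in Hshift. lra.
Qed.

Lemma corr0_nonneg : 0 <= corr n w 0.
Proof.
  rewrite corr0_sum_sq. apply sum_lt_nonneg. intros j _. apply Rle_0_sqr.
Qed.

Lemma forward_form_corr (c : nat -> R) :
  sum_lt n (fun j => w (1 + j)%nat * sum_lt (3 + j) (fun k => c k * w (2 + j - k)%nat))
  = sum_lt (2 + n) (fun k => c k * corr n w (lag k)).
Proof.
  rewrite (sum_lt_ext n _ (fun j => w (1 + j)%nat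
             * sum_lt (2 + n) (fun k => c k * w (2 + j - k)%nat))).
  - rewrite sum_lt_mul_swap. apply sum_lt_ext. intros [|d] _; f_equal; simpl lag.
    + apply sum_lt_ext. intros j _. f_equal; f_equal; lia.
    + rewrite <- corr_backward. apply sum_lt_ext. intros j _. f_equal; f_equal; lia.
  - intros j Hj. f_equal. apply sum_lt_extend; [lia|].
    intros k Hk. replace (2 + j - k)%nat with 0%nat by lia. rewrite w_0. ring.
Qed.

Lemma backward_form_corr (c : nat -> R) :
  sum_lt n (fun j => w (1 + j)%nat * sum_lt (2 + (n - j)) (fun k => c k * w (j + k)%nat))
  = sum_lt (2 + n) (fun k => c k * corr n w (lag k)).
Proof.
  rewrite (sum_lt_ext n _ (fun j => w (1 + j)%nat
             * sum_lt (2 + n) (fun k => c k * w (j + k)%nat))).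
  - rewrite sum_lt_mul_swap. apply sum_lt_ext. intros [|d] _; f_equal; simpl lag.
    + rewrite <- corr_backward. apply sum_lt_ext. intros j _. f_equal; f_equal; lia.
    + apply sum_lt_ext. intros j _. f_equal; f_equal; lia.
  - intros j Hj. f_equal. apply sum_lt_extend; [lia|].
    intros k Hk. rewrite w_out by lia. ring.
Qed.

End Autocorrelation.

Lemma lag_sum_le (c rho : nat -> R) m :
  0 <= c 0%nat + c 2%nat -> (forall k, (3 <= k)%nat -> 0 <= c k) ->
  (forall d, rho d <= rho 0%nat) ->
  sum_lt (3 + m) (fun k => c k * rho (lag k)) <= sum_lt (3 + m) c * rho 0%nat.
Proof.
  intros Hc02 Hc Hrho.
  assert (Hdiff : 0 <= sum_lt (3 + m) (fun k => c k * (rho 0%nat - rho (lag k)))).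
  { change (3 + m)%nat with (S (S (S m))). rewrite !sum_lt_Sl. simpl lag.
    assert (0 <= sum_lt m (fun j => c (S (S (S j))) * (rho 0%nat - rho (S (S j))))).
    { apply sum_lt_nonneg. intros j _. apply Rmult_le_pos; [apply Hc; lia|].
      pose proof (Hrho (S (S j))). lra. }
    pose proof (Hrho 1%nat). nra. }
  rewrite (sum_lt_ext _ _ (fun k => rho 0%nat * c k + -1 * (c k * rho (lag k))))
    in Hdiff by (intros; ring).
  rewrite sum_lt_plus, !sum_lt_scal in Hdiff. lra.
Qed.

(* Concavity of x^a, from exp y >= 1 + y at y = (1-a) ln x and y = -a ln x. *)
Lemma Rpower_le_bernoulli x a :
  0 < x -> 0 <= a <= 1 -> Rpower x a <= 1 + a * (x - 1).
Proof.
  intros Hx Ha. unfold Rpower. set (L := ln x). set (p := exp (a * L)).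
  assert (Hp : 0 < p) by apply exp_pos.
  assert (Ex : x = p * exp ((1 - a) * L)).
  { unfold p. rewrite <- exp_plus, <- (exp_ln x Hx). f_equal. unfold L. ring. }
  assert (E1 : 1 = p * exp (- (a * L))).
  { unfold p. rewrite <- exp_plus, <- exp_0. f_equal. ring. }
  pose proof (exp_ineq1_le ((1 - a) * L)). pose proof (exp_ineq1_le (- (a * L))).
  assert (p * (1 + (1 - a) * L) <= x) by (rewrite Ex; apply Rmult_le_compat_l; lra).
  assert (p * (1 + - (a * L)) <= 1) by (rewrite E1 at 2; apply Rmult_le_compat_l; lra).
  nra.
Qed.

Lemma Rpower_pred_le beta m :
  1 <= beta <= 2 -> 1 < m ->
  Rpower (m - 1) beta <= (m + 1 - beta) / (m + 1) * Rpower m beta.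
Proof.
  intros Hb Hm. set (q := (m - 1) / m).
  assert (Hq : 0 < q) by (unfold q; apply Rdiv_lt_0_compat; lra).
  replace (m - 1) with (m * q) by (unfold q; field; lra).
  rewrite <- Rpower_mult_distr by lra.
  replace beta with (1 + (beta - 1)) at 2 by ring.
  rewrite Rpower_plus, Rpower_1 by exact Hq.
  pose proof (Rpower_le_bernoulli q (beta - 1) Hq ltac:(lra)).
  assert (0 < Rpower m beta) by apply exp_pos.
  assert (0 < Rpower q (beta - 1)) by apply exp_pos.
  assert (Hpoly : q * (1 + (beta - 1) * (q - 1)) <= (m + 1 - beta) / (m + 1)).
  { assert (0 < (m - beta + 1) / (m * m * (m + 1))) by (apply Rdiv_lt_0_compat; nra).
    replace ((m + 1 - beta) / (m + 1))
      with (q * (1 + (beta - 1) * (q - 1)) + (m - beta + 1) / (m * m * (m + 1)))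
      by (unfold q; field; lra).
    lra. }
  rewrite (Rmult_comm (Rpower m beta)). apply Rmult_le_compat_r; [lra|].
  apply Rle_trans with (q * (1 + (beta - 1) * (q - 1))); [|exact Hpoly].
  apply Rmult_le_compat_l; lra.
Qed.

Section Coefficients.
Variable beta : R.
Hypothesis Hb1 : 1 < beta.
Hypothesis Hb2 : beta < 2.
Local Notation g := (gcoef beta).
Local Notation omega := (omega beta).

Lemma gcoef_S k : g (S k) = g k * (INR k - beta) / INR (S k).
Proof.
  unfold gcoef. cbn [gbinom pow].
  assert (INR (S k) <> 0) by (apply not_0_INR; lia). field. assumption.
Qed.

Lemma gcoef_0 : g 0 = 1.
Proof. unfold gcoef. simpl. ring. Qed.

Lemma gcoef_1 : g 1 = - beta.
Proof. rewrite gcoef_S, gcoef_0. simpl. field. Qed.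

Lemma gcoef_2 : g 2 = beta * (beta - 1) / 2.
Proof. rewrite gcoef_S, gcoef_1. simpl. field. Qed.

Lemma gcoef_3 : g 3 = beta * (beta - 1) * (2 - beta) / 6.
Proof. rewrite gcoef_S, gcoef_2. simpl. field. Qed.

Lemma gcoef_pos k : (2 <= k)%nat -> 0 < g k.
Proof.
  induction k as [|k IH]; intros Hk; [lia|].
  destruct (Nat.eq_dec k 1) as [->|Hk1]; [rewrite gcoef_2; nra|].
  rewrite gcoef_S.
  assert (2 <= INR k) by (apply (le_INR 2); lia).
  assert (0 < INR (S k)) by (apply lt_0_INR; lia).
  pose proof (IH ltac:(lia)).
  apply Rdiv_lt_0_compat; nra.
Qed.

Lemma gcoef_partial_sum m : sum_lt (S m) g = g m * (beta - INR m) / beta.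
Proof.
  induction m as [|m IH]; [simpl; rewrite gcoef_0; field; lra|].
  change (sum_lt (S (S m)) g) with (sum_lt (S m) g + g (S m)).
  rewrite IH, gcoef_S, S_INR.
  assert (0 <= INR m) by apply pos_INR. field. lra.
Qed.

Lemma omega_partial_sum j :
  sum_lt (3 + j) omega
  = lam1 beta * sum_lt (3 + j) g + lam0 beta * sum_lt (2 + j) g
    + lamm1 beta * sum_lt (1 + j) g.
Proof.
  induction j as [|j IH]; [simpl; ring|].
  rewrite !Nat.add_succ_r. cbn [sum_lt]. rewrite IH.
  change (omega (3 + j)) with (lam1 beta * g (3 + j) + lam0 beta * g (2 + j) + lamm1 beta * g (1 + j)).
  ring.
Qed.

Lemma omega_0_2_nonneg : 0 <= omega 0 + omega 2.
Proof.
  cbn [Defs.omega]. rewrite gcoef_0, gcoef_1, gcoef_2. unfold lam1, lam0, lamm1.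
  set (s := beta - 1). replace beta with (1 + s) by (unfold s; ring).
  assert (0 < s) by (unfold s; lra).
  assert (0 < s ^ 2) by nra. assert (0 < s ^ 3) by nra. assert (0 < s ^ 4) by nra.
  nra.
Qed.

Lemma omega_nonneg k : (3 <= k)%nat -> 0 <= omega k.
Proof.
  intros Hk. destruct k as [|[|[|j]]]; try lia.
  change (omega (S (S (S j))))
    with (lam1 beta * g (S (S (S j))) + lam0 beta * g (S (S j)) + lamm1 beta * g (S j)).
  unfold lam1, lam0, lamm1.
  set (s := beta - 1). assert (0 < s < 1) by (unfold s; lra).
  destruct j as [|j].
  { rewrite gcoef_3, gcoef_2, gcoef_1. replace beta with (1 + s) by (unfold s; ring).
    assert (0 <= s * (1 - s) * (s ^ 3 + 12 * s ^ 2 + 41 * s + 30)) by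
      (apply Rmult_le_pos; nra).
    match goal with |- 0 <= ?e =>
      replace e with (s * (1 - s) * (s ^ 3 + 12 * s ^ 2 + 41 * s + 30) / 72) by field end.
    lra. }
  rewrite (gcoef_S (S (S (S j)))), (gcoef_S (S (S j))), !S_INR.
  set (x := g (S (S j))). set (t := INR j).
  assert (0 < x) by (apply gcoef_pos; lia).
  assert (0 <= t) by apply pos_INR. clearbody x t.
  (* numerator of omega_(j+4) / g_(j+2), with beta = 1 + s and index j + 2 = 2 + t *)
  set (P := 12 * (t * t) + t * (48 - 30 * s - 6 * s ^ 2) + ((s - 1) * (s + 6)) ^ 2).
  assert (0 <= P).
  { unfold P. assert (0 <= t * (48 - 30 * s - 6 * s ^ 2)) by (apply Rmult_le_pos; nra).
    pose proof (pow2_ge_0 ((s - 1) * (s + 6))). nra. }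
  replace beta with (1 + s) by (unfold s; ring).
  match goal with |- 0 <= ?e =>
    replace e with (x * P / (12 * (t + 1 + 1 + 1) * (t + 1 + 1 + 1 + 1)))
      by (unfold P; field; lra) end.
  apply Rmult_le_pos; [nra|]. apply Rlt_le, Rinv_0_lt_compat. nra.
Qed.

Definition gtail (m : nat) : R := - sum_lt (S m) g.

Lemma gtail_closed m : gtail m = g m * (INR m - beta) / beta.
Proof. unfold gtail. rewrite gcoef_partial_sum. field. lra. Qed.

Lemma gtail_S m : gtail (S m) = gtail m * (INR (S m) - beta) / INR (S m).
Proof.
  rewrite !gtail_closed, gcoef_S, S_INR.
  assert (0 <= INR m) by apply pos_INR. field. lra.
Qed.

Lemma gtail_pos m : (2 <= m)%nat -> 0 < gtail m.
Proof.
  intros Hm. rewrite gtail_closed. pose proof (gcoef_pos m Hm).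
  assert (2 <= INR m) by (apply (le_INR 2); exact Hm).
  apply Rdiv_lt_0_compat; nra.
Qed.

Lemma gtail_2 : gtail 2 = (beta - 1) * (2 - beta) / 2.
Proof. rewrite gtail_closed, gcoef_2. simpl. field. lra. Qed.

Lemma gtail_decay i : gtail 2 <= gtail (2 + i) * Rpower (INR (2 + i) - 1) beta.
Proof.
  induction i as [|i IH].
  - rewrite Nat.add_0_r. replace (INR 2 - 1) with 1 by (simpl; ring). unfold Rpower. rewrite ln_1, Rmult_0_r, exp_0. lra.
  - replace (2 + S i)%nat with (S (2 + i)) by lia.
    rewrite (gtail_S (2 + i)), S_INR. replace (INR (2 + i) + 1 - 1) with (INR (2 + i)) by ring.
    set (m := INR (2 + i)) in *.
    assert (Hm : 2 <= m) by (apply (le_INR 2); lia).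
    pose proof (gtail_pos (2 + i) ltac:(lia)).
    pose proof (Rpower_pred_le beta m ltac:(lra) ltac:(lra)).
    apply Rle_trans with (gtail (2 + i) * ((m + 1 - beta) / (m + 1) * Rpower m beta)).
    + eapply Rle_trans; [exact IH|]. apply Rmult_le_compat_l; lra.
    + apply Req_le. field. lra.
Qed.

Lemma gtail_lower N : (2 <= N)%nat -> gtail 2 <= gtail N * Rpower (INR N) beta.
Proof.
  intros HN. pose proof (gtail_decay (N - 2)) as Hd.
  replace (2 + (N - 2))%nat with N in Hd by lia.
  apply (Rle_trans _ _ _ Hd), Rmult_le_compat_l; [apply Rlt_le, gtail_pos, HN|].
  assert (2 <= INR N) by (apply (le_INR 2); exact HN).
  apply Rle_Rpower_l; lra.
Qed.

Lemma omega_sum_bound N : (5 <= N)%nat -> gtail N / 2 <= - sum_lt (S N) omega.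
Proof.
  intros HN. destruct N as [|[|j]]; try lia.
  rewrite gtail_closed.
  change (sum_lt (S (S (S j))) omega) with (sum_lt (3 + j) omega).
  rewrite omega_partial_sum.
  change (3 + j)%nat with (S (S (S j))). change (2 + j)%nat with (S (S j)).
  change (1 + j)%nat with (S j).
  rewrite !gcoef_partial_sum.
  rewrite (gcoef_S (S j)), (gcoef_S j), !S_INR.
  pose proof (gcoef_pos j ltac:(lia)).
  assert (3 <= INR j) by (pose proof (le_INR 3 j ltac:(lia)) as H3; simpl in H3; lra).
  set (x := g j) in *. set (K := INR j) in *. clearbody x K.
  unfold lam1, lam0, lamm1.
  set (s := beta - 1). set (t := K - 3).
  assert (0 < s < 1) by (unfold s; lra). assert (0 <= t) by (unfold t; lra).
  (* numerator of -sum_(k<=j+2) omega_k - G_(j+2)/2, in beta = 1 + s and m = j + 2 = 5 + t *)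
  set (P := 6 * (t * t) + t * (48 - 12 * s - 6 * s ^ 2)
            + (90 - 50 * s - 13 * s ^ 2 + 8 * s ^ 3 + s ^ 4)).
  assert (0 <= P).
  { unfold P. assert (0 <= t * (48 - 12 * s - 6 * s ^ 2)) by (apply Rmult_le_pos; nra).
    assert (0 <= 90 - 50 * s - 13 * s ^ 2 + 8 * s ^ 3 + s ^ 4) by nra. nra. }
  apply Rminus_le.
  match goal with |- ?e <= 0 =>
    replace e with (- (x * (t + 2 - s) * P / (12 * (1 + s) * (t + 4) * (t + 5))))
      by (unfold P, s, t; field; repeat split; lra) end.
  assert (0 <= x * (t + 2 - s) * P / (12 * (1 + s) * (t + 4) * (t + 5))).
  { apply Rmult_le_pos; [apply Rmult_le_pos; [nra | lra]|].
    apply Rlt_le, Rinv_0_lt_compat. nra. }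
  lra.
Qed.

Lemma omega_form_lower (rho : nat -> R) N :
  (5 <= N)%nat -> 0 <= rho 0%nat -> (forall d, rho d <= rho 0%nat) ->
  gtail N / 2 * rho 0%nat <= - sum_lt (S N) (fun k => omega k * rho (lag k)).
Proof.
  intros HN Hrho0 Hrho.
  pose proof (omega_sum_bound N HN) as Hsum.
  replace (S N) with (3 + (N - 2))%nat in * by lia.
  pose proof (lag_sum_le omega rho (N - 2) omega_0_2_nonneg omega_nonneg Hrho).
  nra.
Qed.

End Coefficients.

Lemma mesh_pos a b N : a < b -> (1 <= N)%nat -> 0 < mesh a b N.
Proof.
  intros Hab HN. apply Rdiv_lt_0_compat; [lra|]. apply lt_0_INR. lia.
Qed.

Lemma Rpower_mesh a b beta N :
  a < b -> (1 <= N)%nat ->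
  Rpower (mesh a b N) (- beta) = Rpower (b - a) (- beta) * Rpower (INR N) beta.
Proof.
  intros Hab HN. assert (0 < INR N) by (apply lt_0_INR; lia).
  unfold mesh, Rdiv. rewrite <- Rpower_mult_distr by (try apply Rinv_0_lt_compat; lra).
  f_equal. unfold Rpower. rewrite ln_Rinv by assumption. f_equal. ring.
Qed.

Definition zero_ext (N : nat) (v : nat -> R) (j : nat) : R :=
  if (j <=? N)%nat then v j else 0.

Section GridForms.
Variables (beta a b : R) (N : nat) (v : nat -> R).
Hypothesis Hb1 : 1 < beta.
Hypothesis Hb2 : beta < 2.
Hypothesis Hab : a < b.
Hypothesis HN : (1 <= N)%nat.
Hypothesis Hv : in_Vh N v.
Local Notation w := (zero_ext N v).
Local Notation h := (mesh a b N).

Lemma zero_ext_le j : (j <= N)%nat -> w j = v j.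
Proof. intros Hj. unfold zero_ext. now rewrite (proj2 (Nat.leb_le j N) Hj). Qed.

Lemma zero_ext_0 : w 0%nat = 0.
Proof. rewrite zero_ext_le by lia. apply Hv. Qed.

Lemma zero_ext_out i : (N - 1 < i)%nat -> w i = 0.
Proof.
  intros Hi. destruct (Nat.eq_dec i N) as [->|Hne].
  - rewrite zero_ext_le by lia. apply Hv.
  - unfold zero_ext. now rewrite (proj2 (Nat.leb_gt i N) ltac:(lia)).
Qed.

Lemma rsum_interior f : rsum 1 (N - 1) f = sum_lt (N - 1) (fun j => f (1 + j)%nat).
Proof. unfold rsum. now replace (S (N - 1) - 1)%nat with (N - 1)%nat by lia. Qed.

Lemma ip_delta_plus :
  ip a b N (fun i => - delta_plus beta a b N v i) v
  = - (h * Rpower h (- beta)) * sum_lt (S N) (fun k => omega beta k * corr (N - 1) w (lag k)).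
Proof.
  unfold ip. rewrite rsum_interior, <- sum_lt_scal.
  replace (S N) with (2 + (N - 1))%nat by lia.
  rewrite <- (forward_form_corr (N - 1) w zero_ext_0 zero_ext_out), <- sum_lt_scal.
  apply sum_lt_ext. intros j Hj.
  unfold delta_plus, rsum. rewrite Nat.sub_0_r, <- (zero_ext_le (1 + j)) by lia.
  rewrite (sum_lt_ext (3 + j) _ (fun k => omega beta k * w (2 + j - k)%nat)); [ring|].
  intros k Hk. rewrite zero_ext_le by lia. f_equal; f_equal; lia.
Qed.

Lemma ip_delta_minus :
  ip a b N (fun i => - delta_minus beta a b N v i) v
  = - (h * Rpower h (- beta)) * sum_lt (S N) (fun k => omega beta k * corr (N - 1) w (lag k)).
Proof.
  unfold ip. rewrite rsum_interior, <- sum_lt_scal.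
  replace (S N) with (2 + (N - 1))%nat by lia.
  rewrite <- (backward_form_corr (N - 1) w zero_ext_0 zero_ext_out), <- sum_lt_scal.
  apply sum_lt_ext. intros j Hj.
  unfold delta_minus, rsum. rewrite Nat.sub_0_r, <- (zero_ext_le (1 + j)) by lia.
  replace (S (S (N - (1 + j)))) with (2 + (N - 1 - j))%nat by lia.
  rewrite (sum_lt_ext (2 + (N - 1 - j)) _ (fun k => omega beta k * w (j + k)%nat)); [ring|].
  intros k Hk. rewrite zero_ext_le by lia. f_equal; f_equal; lia.
Qed.

Lemma sum_sq_corr0 : rsum 1 (N - 1) (fun i => v i * v i) = corr (N - 1) w 0.
Proof.
  rewrite rsum_interior. unfold corr. apply sum_lt_ext. intros j Hj.
  rewrite Nat.add_0_r, zero_ext_le by lia. reflexivity.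
Qed.

Lemma nrm_sq_corr0 : nrm a b N v ^ 2 = h * corr (N - 1) w 0.
Proof.
  pose proof (mesh_pos a b N Hab HN). pose proof (corr0_nonneg (N - 1) w).
  unfold nrm, ip. rewrite sum_sq_corr0, pow2_sqrt by nra. reflexivity.
Qed.

Lemma corr0_pos : (exists i, (i <= N)%nat /\ v i <> 0) -> 0 < corr (N - 1) w 0.
Proof.
  intros [i [Hi Hvi]]. destruct Hv as [Hv0 HvN].
  assert (1 <= i < N)%nat.
  { destruct (Nat.eq_dec i 0) as [->|]; [contradiction|].
    destruct (Nat.eq_dec i N) as [->|]; [contradiction|]. lia. }
  apply (sum_lt_pos _ _ (i - 1)); [| lia |].
  - intros j _. rewrite Nat.add_0_r. apply Rle_0_sqr.
  - rewrite Nat.add_0_r. replace (1 + (i - 1))%nat with i by lia.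
    rewrite zero_ext_le by lia. now apply Rsqr_pos_lt.
Qed.

Lemma nrm_sq_pos : (exists i, (i <= N)%nat /\ v i <> 0) -> 0 < nrm a b N v ^ 2.
Proof.
  intros Hnz. rewrite nrm_sq_corr0.
  apply Rmult_lt_0_compat; [apply mesh_pos | apply corr0_pos]; assumption.
Qed.

Lemma ip_delta_plus_ge :
  (5 <= N)%nat ->
  Rpower (b - a) (- beta) * gtail beta 2 / 2 * nrm a b N v ^ 2
  <= ip a b N (fun i => - delta_plus beta a b N v i) v.
Proof.
  intros H5. rewrite ip_delta_plus, nrm_sq_corr0, (Rpower_mesh a b beta N Hab HN).
  pose proof (corr0_nonneg (N - 1) w) as Hrho0.
  pose proof (omega_form_lower beta Hb1 Hb2 (corr (N - 1) w) N H5 Hrho0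
                (corr_le_corr0 (N - 1) w zero_ext_0 zero_ext_out)) as Hform.
  pose proof (gtail_lower beta Hb1 Hb2 N ltac:(lia)) as Hlow.
  pose proof (gtail_pos beta Hb1 Hb2 N ltac:(lia)).
  set (Q := sum_lt (S N) _) in *.
  set (rho0 := corr (N - 1) w 0) in *.
  set (hR := h * Rpower (b - a) (- beta)).
  assert (0 < hR) by (apply Rmult_lt_0_compat; [apply mesh_pos; assumption | apply exp_pos]).
  set (P := Rpower (INR N) beta) in *.
  assert (hR * (gtail beta 2 * rho0) <= hR * (gtail beta N * P * rho0))
    by (apply Rmult_le_compat_l; nra).
  assert (hR * P * (gtail beta N / 2 * rho0) <= hR * P * - Q)
    by (apply Rmult_le_compat_l; [apply Rmult_le_pos, Rlt_le, exp_pos | ]; lra).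
  replace (- (h * (Rpower (b - a) (- beta) * P)) * Q) with (hR * P * - Q) by (unfold hR; ring).
  replace (Rpower (b - a) (- beta) * gtail beta 2 / 2 * (h * rho0))
    with (hR * (gtail beta 2 * rho0) / 2) by (unfold hR; field).
  lra.
Qed.

End GridForms.

Theorem lemma6 (beta a b : R) (Hb1 : 1 < beta) (Hb2 : beta < 2) (Hab : a < b) :
  exists c1 : R, 0 < c1 /\
    forall (N : nat) (v : nat -> R),
      (5 <= N)%nat -> in_Vh N v -> (exists i, (i <= N)%nat /\ v i <> 0) ->
      ip a b N (fun i => - delta_plus beta a b N v i) v
        = ip a b N (fun i => - delta_minus beta a b N v i) v /\
      ip a b N (fun i => - delta_plus beta a b N v i) v
        > c1 * ln 2 * (nrm a b N v) ^ 2.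
Proof.
  assert (Hln2 : 0 < ln 2) by (pose proof ln_lt_2; lra).
  set (C := Rpower (b - a) (- beta) * gtail beta 2).
  assert (HC : 0 < C).
  { apply Rmult_lt_0_compat; [apply exp_pos|]. rewrite gtail_2; nra. }
  exists (C / (4 * ln 2)). split; [apply Rdiv_lt_0_compat; lra|].
  intros N v HN Hv Hnz. split.
  - rewrite (ip_delta_plus beta a b N v ltac:(lia) Hv).
    now rewrite (ip_delta_minus beta a b N v ltac:(lia) Hv).
  - pose proof (ip_delta_plus_ge beta a b N v Hb1 Hb2 Hab ltac:(lia) Hv HN).
    pose proof (nrm_sq_pos a b N v Hab ltac:(lia) Hv Hnz).
    replace (C / (4 * ln 2) * ln 2) with (C / 4) by (field; lra).
    unfold C in *. nra.
Qed.
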